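(* In the odd setting below, assume $N_k$ is invertible and let $c_k^0,\dots,c_k^{2s}$ be the $n\times n$ blocks of the unique $mn\times n$ matrix $C_k=(c_k^0;\dots;c_k^{2s})$ with $N_kC_k=F^{(k)}_{2s+1}$. Then each $c_k^i$ is homogeneous with respect to the scaling, with $\deg c_k^{2\ell}=\ell/s$ ($\ell=0,\dots,s$) and $\deg c_k^{2\ell+1}=-1+\ell/s$ ($\ell=0,\dots,s-1$); that is, $c_k^i$ has the same degree as $a_k^i$.
   Context: Odd setting: integers $n\ge1$, $s\ge1$, $m=2s+1$; $a_k^0,\dots,a_k^{2s}$ are $n\times n$ matrices with indeterminate entries, $N$-periodic in $k$. $Q_k$ is the $mn\times mn$ block matrix with $I_n$ in blocks $(i+1,i)$, last block column $(a_k^0;\dots;a_k^{2s})$, $O_n$ elsewhere. $r_k=(a_k^0;O_n;a_k^2;O_n;\dots;O_n;a_k^{2s})$. $F^{(k)}_0=r_k$, $F^{(k)}_\ell=Q_k\cdots Q_{k+\ell-1}r_{k+\ell}$, $N_k=(F^{(k)}_0,\dots,F^{(k)}_{2s})$. The scaling, for $\mu>0$: $a^{2r+1}\mapsto\mu^{-1+r/s}a^{2r+1}$ ($r=0,\dots,s-1$), $a^{2r}\mapsto\mu^{r/s}a^{2r}$ ($r=0,\dots,s$), applied for every index $k$; a rational function is homogeneous of degree $d$ if the scaling multiplies it by $\mu^d$, and a matrix is homogeneous of degree $d$ if all its entries are. *)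

From HB Require Import structures.
From mathcomp Require Import all_boot all_order all_algebra.
Set Implicit Arguments. Unset Strict Implicit. Unset Printing Implicit Defensive.
Import Order.TTheory GRing.Theory Num.Theory.
Local Open Scope ring_scope.

Section Odd.
Variables (K : fieldType) (n s : nat).
Notation m := (2 * s + 1)%N.
Notation bd := (\sum_(i < m) n)%N.

(* a k i = a_k^i, the n x n matrices (k : index, i : 'I_m) *)
Definition Qmat (a : nat -> 'I_m -> 'M[K]_n) (k : nat) : 'M[K]_bd :=
  \mxblock_(i < m, j < m)
    (if (j == m.-1 :> nat) then a k i
     else if (i == j.+1 :> nat) then (1%:M : 'M[K]_n) else 0).

Definition rvec (a : nat -> 'I_m -> 'M[K]_n) (k : nat) : 'M[K]_(bd, n) :=
  \mxcol_(i < m) (if odd i then 0 else a k i).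

Fixpoint QP (a : nat -> 'I_m -> 'M[K]_n) (k l : nat) : 'M[K]_bd :=
  match l with
  | 0 => 1%:M
  | l'.+1 => Qmat a k *m QP a k.+1 l'
  end.

Definition Fvec (a : nat -> 'I_m -> 'M[K]_n) (k l : nat) : 'M[K]_(bd, n) :=
  QP a k l *m rvec a (k + l).

Definition Nmat (a : nat -> 'I_m -> 'M[K]_n) (k : nat) : 'M[K]_bd :=
  \mxrow_(j < m) Fvec a k j.

Definition Cvec (a : nat -> 'I_m -> 'M[K]_n) (k : nat) : 'M[K]_(bd, n) :=
  invmx (Nmat a k) *m Fvec a k m.

Definition cblock (a : nat -> 'I_m -> 'M[K]_n) (k : nat) (i : 'I_m) : 'M[K]_n :=
  submxcol (Cvec a k) i.

End Odd.

(* Degree of a^i measured in lambda, where mu = lambda^s: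
   a^{2r} has mu-degree r/s, i.e. lambda-degree r;
   a^{2r+1} has mu-degree -1 + r/s, i.e. lambda-degree r - s. *)
Definition ldeg (s i : nat) : int :=
  if odd i then (i./2)%:Z - s%:Z else (i./2)%:Z.

Definition scale (K : fieldType) (n s : nat) (lam : K)
  (a : nat -> 'I_(2 * s + 1) -> 'M[K]_n) : nat -> 'I_(2 * s + 1) -> 'M[K]_n :=
  fun k i => lam ^ (ldeg s i) *: a k i.

From HB Require Import structures.
From mathcomp Require Import all_boot all_order all_algebra.
From mathcomp Require Import ring.
Import GRing.Theory.
Local Open Scope ring_scope.
Set Implicit Arguments. Unset Strict Implicit. Unset Printing Implicit Defensive.

(* Split [Q_k = Q'_k + r_k e], where [Q'_k] keeps only the odd-indexed [a_k^i]
   of the last block column and [e] reads off the last block.  Expanding the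
   products [F_l = Q_k ... Q_{k+l-1} r_{k+l}] along this splitting gives
   [F_l = G_l + sum_(j < l) F_j h_jl] with [G_l = Q'_k ... Q'_{k+l-1} r_{k+l}],
   i.e. [N_k (1 - H_k) = M_k := (G_0, ..., G_2s)] with [H_k] strictly block
   upper triangular.  The [G_l] are well behaved under the scaling: the block
   [i] of [G_l] vanishes unless [i = l] mod 2, and otherwise gets multiplied by
   [lambda^(i/2 - l/2)] (floor halves), where [mu = lambda^s].  So the scaled [M_k] is a
   diagonal conjugate of [M_k], and [C_k = h + (1 - H_k) M_k^-1 G_(2s+1)]
   inherits the degrees of the [a_k^i]. *)

Lemma unitmx_1_sub_strict_upper (R : comUnitRingType) (p n : nat)
    (B : 'I_p -> 'I_p -> 'M[R]_n) :
  (forall i j : 'I_p, (j <= i)%N -> B i j = 0) ->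
  1%:M - \mxblock_(i, j) B i j \in unitmx.
Proof.
move=> B_upper; rewrite unitmxE -det_tr det_trig.
  by rewrite big1 ?unitr1 // => i _; rewrite !mxE B_upper // mxE eqxx subr0.
have -> : (1%:M - \mxblock_(i, j) B i j)^T
    = \mxblock_(i, j) ((if i == j then 1%:M else 0) - (B j i)^T).
  rewrite linearB /= trmx1 tr_mxblock mxblockB.
  rewrite -(mxdiagZ (p_ := fun _ : 'I_p => n)) /mxdiag; congr (_ - _).
  by apply: eq_mxblock => i j; case: eqP => // _; rewrite conform_mx_id.
apply/is_trig_mxblockP; split => [i j lt_ij|i].
  rewrite (B_upper j i (ltnW lt_ij)) trmx0 subr0.
  by case: eqP lt_ij => [->|]; rewrite ?ltnn.
by rewrite eqxx B_upper // trmx0 subr0 scalar_mx_is_trig.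
Qed.

Lemma halfS (x : nat) : x.+1./2 = (odd x + x./2)%N.
Proof. by rewrite -uphalfE uphalf_half. Qed.

Section Odd.
Variables (K : fieldType) (n s : nat).
Notation m := (2 * s + 1)%N.
Notation bd := (\sum_(i < m) n)%N.
Notation blk X i := (@submxcol _ _ (fun _ : 'I_m => n) _ X i).
Implicit Types (a : nat -> 'I_m -> 'M[K]_n) (X : 'M[K]_(bd, n)).

Lemma blk_mul_mxblock (B : 'I_m -> 'I_m -> 'M[K]_n) X i :
  blk (\mxblock_(i, j) B i j *m X) i = \sum_j B i j *m blk X j.
Proof. by rewrite -[X in _ *m X]submxcolK mul_mxblock_mxrow mxcolK. Qed.

Lemma blk_mul_mxrow (F : 'I_m -> 'M[K]_(bd, n)) X i :
  blk (\mxrow_j F j *m X) i = \sum_j blk (F j) i *m blk X j.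
Proof.
rewrite -[X in _ *m X]submxcolK mul_mxrow_mxcol submxcol_sum.
by apply: eq_bigr => j _; rewrite submxcol_mul.
Qed.

Lemma blkZ (c : K) X i : blk (c *: X) i = c *: blk X i.
Proof. by rewrite -!mul_mx_scalar submxcol_mul. Qed.

Definition ord_last : 'I_m := @Ordinal m (2 * s) ltac:(by rewrite addn1).

Lemma ord_lastE : (ord_last : nat) = (2 * s)%N. Proof. by []. Qed.

Lemma odd_ord_last : odd ord_last = false.
Proof. by rewrite ord_lastE mul2n odd_double. Qed.

Definition prev_blk X (i : 'I_m) : 'M[K]_n :=
  \sum_(j < m) if (i == j.+1 :> nat) then blk X j else 0.

Lemma prev_blkP (i : 'I_m) :
  ((i : nat) = 0%N /\ forall X, prev_blk X i = 0) \/
  exists j : 'I_m, (i : nat) = j.+1 /\ forall X, prev_blk X i = blk X j.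
Proof.
rewrite /prev_blk; case: i => [[|i] lt_i_m] /=.
  by left; split => // X; rewrite big1.
right; have lt_i'_m : (i < m)%N by apply: ltnW.
exists (Ordinal lt_i'_m); split => // X.
rewrite (bigD1 (Ordinal lt_i'_m)) //= eqxx big1 ?addr0 // => j ne_j.
by case: eqP => // -[eq_ij]; case/eqP: ne_j; apply: val_inj.
Qed.

Definition companion (A : 'I_m -> 'M[K]_n) : 'M[K]_bd :=
  \mxblock_(i < m, j < m)
    (if (j == m.-1 :> nat) then A i
     else if (i == j.+1 :> nat) then (1%:M : 'M[K]_n) else 0).

Lemma blk_mul_companion A X i :
  blk (companion A *m X) i = A i *m blk X ord_last + prev_blk X i.
Proof.
have last_m : (m.-1 = 2 * s)%N by rewrite addn1.
rewrite blk_mul_mxblock (bigD1 ord_last) //= last_m eqxx; congr (_ + _).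
rewrite /prev_blk [RHS](bigD1 ord_last) //=.
have -> : (i == (2 * s).+1 :> nat) = false.
  by apply: negbTE; apply: contraTneq (ltn_ord i) => ->; rewrite addn1 ltnn.
rewrite add0r; apply: eq_bigr => j ne_j_last.
have -> : (j == 2 * s :> nat) = false by apply/negbTE.
by case: ifP; rewrite ?mul1mx ?mul0mx.
Qed.

Definition Qodd a k : 'M[K]_bd := companion (fun i => if odd i then a k i else 0).

Lemma blk_mul_Qmat a k X i :
  blk (Qmat a k *m X) i = a k i *m blk X ord_last + prev_blk X i.
Proof. exact: blk_mul_companion. Qed.

Lemma blk_mul_Qodd a k X i :
  blk (Qodd a k *m X) i = (if odd i then a k i else 0) *m blk X ord_last + prev_blk X i.
Proof. exact: blk_mul_companion. Qed.

Lemma blk_rvec a k i : blk (rvec a k) i = if odd i then 0 else a k i.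
Proof. exact: mxcolK. Qed.

Definition row_last : 'M[K]_(n, bd) := \mxrow_j (if j == ord_last then 1%:M else 0).

Lemma mul_row_last X : row_last *m X = blk X ord_last.
Proof.
rewrite -[X in _ *m X]submxcolK mul_mxrow_mxcol (bigD1 ord_last) //= eqxx mul1mx.
by rewrite big1 ?addr0 // => j /negbTE ->; rewrite mul0mx.
Qed.

Lemma mul_Qmat_split a k X :
  Qmat a k *m X = Qodd a k *m X + rvec a k *m (row_last *m X).
Proof.
apply/mxcolP => i; rewrite submxcolD blk_mul_Qmat blk_mul_Qodd -submxcol_mul.
by rewrite blk_rvec mul_row_last; case: (odd i); rewrite ?mul0mx ?add0r ?addr0 // addrC.
Qed.

Fixpoint QoddP a k l : 'M[K]_bd :=
  if l is l'.+1 then Qodd a k *m QoddP a k.+1 l' else 1%:M.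

Definition Gvec a k l : 'M[K]_(bd, n) := QoddP a k l *m rvec a (k + l).

Lemma Fvec0 a k : Fvec a k 0 = rvec a k.
Proof. by rewrite /Fvec mul1mx addn0. Qed.

Lemma Gvec0 a k : Gvec a k 0 = rvec a k.
Proof. by rewrite /Gvec mul1mx addn0. Qed.

Lemma FvecS a k l : Fvec a k l.+1 = Qmat a k *m Fvec a k.+1 l.
Proof. by rewrite /Fvec -mulmxA addSnnS. Qed.

Lemma GvecS a k l : Gvec a k l.+1 = Qodd a k *m Gvec a k.+1 l.
Proof. by rewrite /Gvec -mulmxA addSnnS. Qed.

Definition hcoef a k (j l : nat) : 'M[K]_n :=
  if (j < l)%N then row_last *m Gvec a (k + j).+1 (l - j.+1) else 0.

Lemma Fvec_decomp a k l :
  Fvec a k l = Gvec a k l + \sum_(j < l) Fvec a k j *m hcoef a k j l.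
Proof.
elim: l k => [|l IHl] k; first by rewrite Fvec0 Gvec0 big_ord0 addr0.
rewrite FvecS IHl mulmxDr mul_Qmat_split -GvecS mulmx_sumr big_ord_recl /=.
rewrite -Fvec0 -addrA /hcoef /= addn0 subSS subn0; congr (_ + (_ + _)).
by apply: eq_bigr => j _; rewrite mulmxA -FvecS /= ltnS subSS addSnnS.
Qed.

Lemma Gvec_parity a k l (i : 'I_m) : odd i != odd l -> blk (Gvec a k l) i = 0.
Proof.
elim: l k i => [|l IHl] k i par_il; first by rewrite Gvec0 blk_rvec; case: (odd i) par_il.
have {}par_il : odd i = odd l by move: par_il => /=; case: (odd i); case: (odd l).
rewrite GvecS blk_mul_Qodd.
have -> : (if odd i then a k i else 0) *m blk (Gvec a k.+1 l) ord_last = 0.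
  case: ifP => odd_i; last by rewrite mul0mx.
  by rewrite IHl ?mulmx0 // odd_ord_last -par_il odd_i.
rewrite add0r; case: (prev_blkP i) => [[_ ->]|[j [i_j ->]]] //.
by apply: IHl; move: par_il; rewrite i_j /=; case: (odd j); case: (odd l).
Qed.

Definition hdeg (i : nat) : int := (i./2)%:Z.

Lemma hdeg_ord_last : hdeg ord_last = s%:Z.
Proof. by rewrite /hdeg ord_lastE mul2n doubleK. Qed.

Lemma odd_m : odd m.
Proof. by rewrite addn1 /= mul2n odd_double. Qed.

Lemma hdeg_m : hdeg m = s%:Z.
Proof. by rewrite /hdeg addn1 halfS mul2n odd_double doubleK. Qed.

Lemma ldeg_odd (j : nat) : odd j -> ldeg s j = hdeg j - s%:Z.
Proof. by rewrite /ldeg => ->. Qed.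

Lemma ldeg_m : ldeg s m = 0.
Proof. by rewrite ldeg_odd ?odd_m // hdeg_m subrr. Qed.

Lemma Gvec_scale (lam : K) a k l (i : 'I_m) : lam != 0 ->
  blk (Gvec (scale lam a) k l) i = lam ^ (hdeg i - hdeg l) *: blk (Gvec a k l) i.
Proof.
move=> lam_neq0; elim: l k i => [|l IHl] k i.
  rewrite !Gvec0 !blk_rvec /scale /ldeg /hdeg /= subr0.
  by case: (odd i); rewrite ?scaler0.
rewrite !GvecS !blk_mul_Qodd IHl scalerDr; congr (_ + _).
  case: ifP => [odd_i|_]; last by rewrite !mul0mx scaler0.
  have [odd_l|even_l] := boolP (odd l).
    have -> : blk (Gvec a k.+1 l) ord_last = 0.
      by apply: Gvec_parity; rewrite odd_ord_last odd_l.
    by rewrite scaler0 !mulmx0 scaler0.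
  rewrite /scale -scalemxAl -scalemxAr scalerA -expfzDr //; congr (_ *: _).
  rewrite /ldeg odd_i hdeg_ord_last /hdeg halfS (negbTE even_l) add0n.
  congr (_ ^ _); ring.
case: (prev_blkP i) => [[_ prev0]|[j [i_j prevj]]]; first by rewrite !prev0 scaler0.
rewrite !prevj IHl; have [par_jl|npar_jl] := eqVneq (odd j) (odd l).
  congr (_ *: _); congr (_ ^ _); rewrite /hdeg i_j !halfS par_jl.
  by case: (odd l); rewrite ?add0n ?add1n -?addn1 ?PoszD; ring.
by rewrite Gvec_parity ?scaler0.
Qed.

Definition Mmat a k : 'M[K]_bd := \mxrow_(j < m) Gvec a k j.
Definition Hmat a k : 'M[K]_bd := \mxblock_(j < m, l < m) hcoef a k j l.
Definition hvec a k : 'M[K]_(bd, n) := \mxcol_(j < m) hcoef a k j m.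

Lemma Fvec_decomp_widen a k l : (l <= m)%N ->
  Fvec a k l = Gvec a k l + \sum_(j < m) Fvec a k j *m hcoef a k j l.
Proof.
move=> le_l_m; rewrite Fvec_decomp (big_ord_widen m (fun j => Fvec a k j *m hcoef a k j l)) //.
rewrite (big_mkcond (fun j : 'I_m => (j < l)%N)); congr (_ + _); apply: eq_bigr => j _.
by case: ifP => // ge_j_l; rewrite /hcoef ge_j_l mulmx0.
Qed.

Lemma Mmat_Nmat a k : Mmat a k = Nmat a k *m (1%:M - Hmat a k).
Proof.
rewrite mulmxBr mulmx1; apply/eqP; rewrite eq_sym subr_eq; apply/eqP.
apply/mxrowP => l; rewrite submxrowD /Nmat /Mmat /Hmat mul_mxrow_mxblock !mxrowK.
by rewrite Fvec_decomp_widen // ltnW.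
Qed.

Lemma Fvec_last a k : Fvec a k m = Gvec a k m + Nmat a k *m hvec a k.
Proof. by rewrite /Nmat /hvec mul_mxrow_mxcol Fvec_decomp_widen. Qed.

Lemma unitmx_1_sub_Hmat a k : 1%:M - Hmat a k \in unitmx.
Proof. by apply: unitmx_1_sub_strict_upper => j l le_l_j; rewrite /hcoef ltnNge le_l_j. Qed.

Lemma unitmx_Mmat a k : (Mmat a k \in unitmx) = (Nmat a k \in unitmx).
Proof. by rewrite Mmat_Nmat unitmx_mul unitmx_1_sub_Hmat andbT. Qed.

Definition yvec a k : 'M[K]_(bd, n) := invmx (Mmat a k) *m Gvec a k m.

Lemma yvec_even a k (j : 'I_m) : Nmat a k \in unitmx -> ~~ odd j -> blk (yvec a k) j = 0.
Proof.
rewrite -unitmx_Mmat => M_unit even_j; set y := yvec a k.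
pose y_even : 'M[K]_(bd, n) := \mxcol_(l < m) (if odd l then 0 else blk y l).
suff M_y_even : Mmat a k *m y_even = 0.
  have y_even0 : y_even = 0 by rewrite -[y_even](mulKmx M_unit) M_y_even mulmx0.
  by move: (congr1 (fun X => blk X j) y_even0); rewrite /= mxcolK (negbTE even_j) submxcol0.
apply/mxcolP => i; rewrite submxcol0 blk_mul_mxrow.
have [odd_i|even_i] := boolP (odd i).
  apply: big1 => l _; rewrite mxcolK; case: ifP => [_|even_l]; first by rewrite mulmx0.
  by rewrite Gvec_parity ?mul0mx // odd_i even_l.
have G_i : blk (Gvec a k m) i = 0 by rewrite Gvec_parity // odd_m (negbTE even_i).
rewrite -[RHS]G_i -(mulKVmx M_unit (Gvec a k m)) -/(yvec a k) -/y blk_mul_mxrow.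
apply: eq_bigr => l _; rewrite mxcolK; case: ifP => // odd_l.
by rewrite Gvec_parity ?mul0mx ?mulmx0 // odd_l (negbTE even_i).
Qed.

Lemma Cvec_decomp a k : Nmat a k \in unitmx ->
  Cvec a k = hvec a k + (1%:M - Hmat a k) *m yvec a k.
Proof.
move=> N_unit; have M_unit : Mmat a k \in unitmx by rewrite unitmx_Mmat.
rewrite /Cvec Fvec_last -{1}(mulKVmx M_unit (Gvec a k m)) -/(yvec a k).
by rewrite Mmat_Nmat -mulmxA -mulmxDr mulKmx // addrC.
Qed.

Definition mxdiag_scalar (f : 'I_m -> K) : 'M[K]_bd := \mxdiag_(i < m) ((f i)%:M : 'M[K]_n).

Lemma blk_mul_mxdiag_scalar f X i : blk (mxdiag_scalar f *m X) i = f i *: blk X i.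
Proof. by rewrite -[X in _ *m X]submxcolK mul_mxdiag_mxcol mxcolK mul_scalar_mx. Qed.

Lemma mxdiag_scalar_mul f g : mxdiag_scalar f *m mxdiag_scalar g = mxdiag_scalar (fun i => f i * g i).
Proof.
rewrite {2}/mxdiag_scalar mul_mxdiag_mxblock /mxdiag_scalar /mxdiag; apply: eq_mxblock => i j.
by case: eqP => _; rewrite ?mulmx0 // !conform_mx_id -scalar_mxM.
Qed.

Lemma mxdiag_scalarVK f : (forall i, f i != 0) -> mxdiag_scalar (fun i => (f i)^-1) *m mxdiag_scalar f = 1%:M.
Proof.
move=> f_neq0; rewrite mxdiag_scalar_mul -(mxdiagZ (p_ := fun _ : 'I_m => n)).
by apply/eq_mxdiagP => i; rewrite mulVf.
Qed.

Section Scaling.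
Variables (lam : K) (lam_neq0 : lam != 0).
Let D := mxdiag_scalar (fun i => lam ^ hdeg i).
Let D' := mxdiag_scalar (fun i => (lam ^ hdeg i)^-1).

Let D'K : D' *m D = 1%:M.
Proof. by apply: mxdiag_scalarVK => i; rewrite expfz_neq0. Qed.

Lemma Mmat_scale a k : Mmat (scale lam a) k = D *m Mmat a k *m D'.
Proof.
apply/mxrowP => j; rewrite /Mmat mul_mxrow /D' mul_mxrow_mxdiag !mxrowK.
apply/mxcolP => i; rewrite Gvec_scale // -[in RHS]submxcol_mul mul_mx_scalar /D blk_mul_mxdiag_scalar.
by rewrite scalerA invr_expz -expfzDr // addrC.
Qed.

Lemma unitmx_Nmat_scale a k : Nmat a k \in unitmx -> Nmat (scale lam a) k \in unitmx.
Proof.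
rewrite -!unitmx_Mmat Mmat_scale => M_unit.
have [D'_unit D_unit] := mulmx1_unit D'K.
by rewrite !unitmx_mul D_unit M_unit D'_unit.
Qed.

Lemma yvec_scale a k (j : 'I_m) : Nmat a k \in unitmx ->
  blk (yvec (scale lam a) k) j = lam ^ (ldeg s j) *: blk (yvec a k) j.
Proof.
move=> N_unit; have M_unit : Mmat a k \in unitmx by rewrite unitmx_Mmat.
have M'_unit : Mmat (scale lam a) k \in unitmx.
  by rewrite unitmx_Mmat unitmx_Nmat_scale.
have G_scale : Gvec (scale lam a) k m = lam ^ (- s%:Z) *: (D *m Gvec a k m).
  apply/mxcolP => i; rewrite Gvec_scale // blkZ blk_mul_mxdiag_scalar scalerA.
  by rewrite -expfzDr // hdeg_m addrC.
have -> : yvec (scale lam a) k = lam ^ (- s%:Z) *: (D *m yvec a k).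
  rewrite /yvec G_scale; apply: (canLR (mulKmx M'_unit)).
  by rewrite Mmat_scale -scalemxAr -!mulmxA (mulmxA D') D'K mul1mx mulKVmx.
rewrite blkZ blk_mul_mxdiag_scalar scalerA -expfzDr // addrC.
have [/ldeg_odd -> //|even_j] := boolP (odd j).
by rewrite yvec_even // !scaler0.
Qed.

Lemma hcoef_scale a k (j l : nat) : odd l ->
  hcoef (scale lam a) k j l = lam ^ (ldeg s j - ldeg s l) *: hcoef a k j l.
Proof.
move=> odd_l; rewrite /hcoef; case: ifP => [lt_jl|_]; last by rewrite scaler0.
rewrite !mul_row_last Gvec_scale //; set d := (l - j.+1)%N.
have [odd_d|even_d] := boolP (odd d).
  by rewrite Gvec_parity ?scaler0 // odd_ord_last odd_d.
have l_dj : l = (d + j.+1)%N by rewrite subnK.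
have even_j : odd j = false.
  by move: odd_l; rewrite l_dj oddD (negbTE even_d) /=; case: (odd j).
congr (_ *: _); congr (_ ^ _).
rewrite /ldeg odd_l even_j hdeg_ord_last /hdeg l_dj halfD halfS even_j.
by rewrite (negbTE even_d) /= add0n PoszD; ring.
Qed.

End Scaling.
End Odd.

Theorem mainTheorem10 (K : fieldType) (n s N : nat) (hn : (1 <= n)%N) (hs : (1 <= s)%N)
  (hN : (1 <= N)%N) (a : nat -> 'I_(2 * s + 1) -> 'M[K]_n)
  (hper : forall k i, a (k + N)%N i = a k i)
  (k : nat) (hinv : Nmat a k \in unitmx)
  (lam : K) (hlam : lam != 0) :
  forall i : 'I_(2 * s + 1),
    cblock (scale lam a) k i = lam ^ (ldeg s i) *: cblock a k i.
Proof.
move=> i; rewrite /cblock (Cvec_decomp (unitmx_Nmat_scale hlam hinv)) (Cvec_decomp hinv).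
rewrite !mulmxBl !mul1mx !submxcolD !submxcolN /Hmat !blk_mul_mxblock /hvec !mxcolK.
rewrite hcoef_scale ?odd_m // ldeg_m subr0 yvec_scale //.
rewrite !scalerDr scalerN scaler_sumr; congr (_ + (_ - _)).
apply: eq_bigr => l _; rewrite yvec_scale //.
have [odd_l|even_l] := boolP (odd l); last by rewrite yvec_even // !scaler0 !mulmx0 scaler0.
by rewrite hcoef_scale // -scalemxAl -scalemxAr scalerA -expfzDr // subrK.
Qed.
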